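(* Let $K$ be a Noetherian unital commutative ring, let $A$ be a (not necessarily unital) commutative $K$-algebra such that $A\rtimes K$ is a finitely generated unital $K$-algebra, and let $s\in K$. Then the level morphism of pro-sets $$A^{(s^\infty)}\to\varprojlim\nolimits_n^{\mathrm{Pro}(\mathbf{Set})}s^nA,\qquad a\in A^{(s^n)}\mapsto s^na,$$ is an isomorphism in $\mathrm{Pro}(\mathbf{Set})$, where the right-hand side is the inverse system of ideals $\cdots\subseteq s^2A\subseteq sA\subseteq A$ with inclusions as transition maps. Moreover, the morphism of pro-sets $\varprojlim_n s^nA\to A_s$, $s^na\mapsto \frac{s^na}{1}$, into the constant pro-set $A_s$ (the localization) is a monomorphism in $\mathrm{Pro}(\mathbf{Set})$.
   Context: $A\rtimes K$ denotes $A\oplus K$ with product $(a,k)(a',k')=(aa'+ak'+a'k,kk')$. For $t\in K$ the homotope $A^{(t)}$ is the set $A$ with the product $a*b=tab$. The colocalization $A^{(s^\infty)}$ is the pro-object (inverse system) $\cdots\to A^{(s^2)}\to A^{(s)}\to A$ in $\mathrm{Pro}(\mathbf{Set})$ with transition maps $A^{(s^{n+1})}\to A^{(s^n)}$, $a\mapsto sa$. For a category $\mathbf C$, $\mathrm{Pro}(\mathbf C)$ has as objects contravariant functors $X\colon\mathbf I_X\to\mathbf C$ from small filtered categories, with $\mathrm{Hom}(X,Y)=\varprojlim_{j\in\mathbf I_Y}\varinjlim_{i\in\mathbf I_X}\mathbf C(X(i),Y(j))$; a level morphism is one given by compatible maps between the terms of inverse systems with the same index category. *)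

From HB Require Import structures.
From mathcomp Require Import all_boot all_order all_algebra.
From mathcomp Require Import zify.
From Stdlib Require Import ProofIrrelevance.

Set Implicit Arguments.
Unset Strict Implicit.
Unset Printing Implicit Defensive.

Import Order.TTheory GRing.Theory.
Local Open Scope ring_scope.

Definition is_ideal (K : comPzRingType) (I : K -> Prop) : Prop :=
  [/\ I 0, (forall x y, I x -> I y -> I (x + y)) & (forall r x, I x -> I (r * x))].

Definition noetherian (K : comPzRingType) : Prop :=
  forall I : nat -> K -> Prop,
    (forall n, is_ideal (I n)) ->
    (forall n x, I n x -> I n.+1 x) ->
    exists N, forall n x, (N <= n)%N -> I n x -> I N x.

Definition nucomalg (K : comPzRingType) (A : lmodType K) (mul : A -> A -> A) : Prop :=
  [/\ (forall a b c, mul a (mul b c) = mul (mul a b) c),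
      (forall a b, mul a b = mul b a),
      (forall a b c, mul (a + b) c = mul a c + mul b c)
    & (forall (k : K) a b, mul (k *: a) b = k *: mul a b)].

Section Unitization.
Variables (K : comPzRingType) (A : lmodType K) (mul : A -> A -> A).

Definition sd_add (x y : A * K) : A * K := (x.1 + y.1, x.2 + y.2).
Definition sd_scale (r : K) (x : A * K) : A * K := (r *: x.1, r * x.2).
Definition sd_mul (x y : A * K) : A * K :=
  (mul x.1 y.1 + y.2 *: x.1 + x.2 *: y.1, x.2 * y.2).
Definition sd_one : A * K := (0, 1).

Definition fg_unitization : Prop :=
  exists gens : seq (A * K),
    forall x : A * K, forall S : A * K -> Prop,
      S sd_one ->
      (forall g, g \in gens -> S g) ->
      (forall y z, S y -> S z -> S (sd_add y z)) ->
      (forall r y, S y -> S (sd_scale r y)) ->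
      (forall y z, S y -> S z -> S (sd_mul y z)) ->
      S x.
End Unitization.

Record cat := Cat {
  cobj :> Type;
  chom : cobj -> cobj -> Type;
  cid : forall i, chom i i;
  ccomp : forall i j k, chom j k -> chom i j -> chom i k;
  ccomp_id_l : forall i j (u : chom i j), ccomp (cid j) u = u;
  ccomp_id_r : forall i j (u : chom i j), ccomp u (cid i) = u;
  ccomp_assoc : forall i j k l (u : chom i j) (v : chom j k) (w : chom k l),
      ccomp w (ccomp v u) = ccomp (ccomp w v) u
}.

Definition filtered (C : cat) : Prop :=
  [/\ inhabited C,
      (forall i j : C, exists k : C, inhabited (chom i k) /\ inhabited (chom j k))
    & (forall (i j : C) (u v : chom i j), exists (k : C) (w : chom j k),
          ccomp w u = ccomp w v)].

Record proset := ProSet {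
  pidx : cat;
  pidx_filtered : filtered pidx;
  pobj : pidx -> Type;
  pmap : forall i j : pidx, chom i j -> pobj j -> pobj i;
  pmap_id : forall i x, pmap (cid i) x = x;
  pmap_comp : forall (i j k : pidx) (u : chom i j) (v : chom j k) x,
      pmap (ccomp v u) x = pmap u (pmap v x)
}.

(* representatives of elements of colim_i Set(X i, Y j) *)
Definition prorep (X Y : proset) (j : pidx Y) : Type :=
  {i : pidx X & @pobj X i -> @pobj Y j}.
Arguments prorep : clear implicits.

(* the equality of the filtered colimit colim_i Set(X i, Y j) *)
Definition prorep_eq (X Y : proset) (j : pidx Y) (f g : prorep X Y j) : Prop :=
  exists (k : pidx X) (u : chom (projT1 f) k) (v : chom (projT1 g) k),
    forall x, projT2 f (@pmap X _ _ u x) = projT2 g (@pmap X _ _ v x).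

Definition prorawhom (X Y : proset) : Type := forall j : pidx Y, prorep X Y j.
Arguments prorawhom : clear implicits.

(* the family defines an element of lim_j colim_i Set(X i, Y j) *)
Definition is_prohom (X Y : proset) (f : prorawhom X Y) : Prop :=
  forall (j j' : pidx Y) (v : chom j j'),
    prorep_eq (existT (fun i => @pobj X i -> @pobj Y j)
                      (projT1 (f j')) (fun x => @pmap Y _ _ v (projT2 (f j') x)))
              (f j).

Definition prohom_eq (X Y : proset) (f g : prorawhom X Y) : Prop :=
  forall j, prorep_eq (f j) (g j).

Definition proid (X : proset) : prorawhom X X :=
  fun j => existT (fun i => @pobj X i -> @pobj X j) j (fun x => x).
Arguments proid : clear implicits.

Definition procomp (X Y Z : proset) (g : prorawhom Y Z) (f : prorawhom X Y)
  : prorawhom X Z :=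
  fun k => existT (fun i => @pobj X i -> @pobj Z k)
                  (projT1 (f (projT1 (g k))))
                  (fun x => projT2 (g k) (projT2 (f (projT1 (g k))) x)).

Definition pro_iso (X Y : proset) (f : prorawhom X Y) : Prop :=
  is_prohom f /\
  exists g : prorawhom Y X,
    [/\ is_prohom g, prohom_eq (procomp g f) (proid X)
      & prohom_eq (procomp f g) (proid Y)].

Definition pro_mono (X Y : proset) (f : prorawhom X Y) : Prop :=
  is_prohom f /\
  forall (Z : proset) (g1 g2 : prorawhom Z X),
    is_prohom g1 -> is_prohom g2 ->
    prohom_eq (procomp f g1) (procomp f g2) -> prohom_eq g1 g2.

Definition natcat : cat.
Proof.
refine (@Cat nat (fun i j => is_true (i <= j)%N) (fun i => leqnn i)
          (fun i j k v u => leq_trans u v) _ _ _);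
  by move=> *; apply: bool_irrelevance.
Defined.

Lemma natcat_filtered : filtered natcat.
Proof.
split.
- exact: inhabits 0%N.
- move=> i j; exists (maxn i j); split; apply: inhabits => /=.
  + exact: leq_maxl.
  + exact: leq_maxr.
- move=> i j u v; exists j; exists (leqnn j); exact: bool_irrelevance.
Qed.

Definition unitcat : cat.
Proof.
refine (@Cat unit (fun _ _ => unit) (fun _ => tt) (fun _ _ _ _ _ => tt) _ _ _).
  - by move=> i j [].
  - by move=> i j [].
  - by [].
Defined.

Lemma unitcat_filtered : filtered unitcat.
Proof.
split.
- exact: inhabits tt.
- by move=> i j; exists tt; split; apply: inhabits.
- by move=> i j [] []; exists tt; exists tt.
Qed.

Definition const_proset (S : Type) : proset :=
  @ProSet unitcat unitcat_filtered (fun _ => S) (fun _ _ _ x => x)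
          (fun _ _ => erefl) (fun _ _ _ _ _ _ => erefl).

Section Towers.
Variables (K : comPzRingType) (A : lmodType K) (s : K).

(* The colocalization A^(s^oo) : ... -> A^(s^2) -> A^(s) -> A, as a pro-set;
   the underlying set of the homotope A^(s^n) is A, and the transition map
   A^(s^j) -> A^(s^i) (i <= j) is a |-> s^(j-i) a. *)
Definition coloc_map (i j : natcat) (h : chom i j) (a : A) : A :=
  s ^+ (j - i) *: a.

Lemma coloc_map_id (i : natcat) (a : A) : coloc_map (cid i) a = a.
Proof. by rewrite /coloc_map subnn expr0 scale1r. Qed.

Lemma coloc_map_comp (i j k : natcat) (u : chom i j) (v : chom j k) (a : A) :
  coloc_map (ccomp v u) a = coloc_map u (coloc_map v a).
Proof.
rewrite /coloc_map scalerA -exprD.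
have hu : (i <= j)%N := u. have hv : (j <= k)%N := v.
by have -> : (k - i = (j - i) + (k - j))%N by lia.
Qed.

Definition coloc_proset : proset :=
  @ProSet natcat natcat_filtered (fun _ => A) coloc_map
          coloc_map_id coloc_map_comp.

Definition sA (n : nat) : Type := {a : A | exists b : A, a = s ^+ n *: b}.

Lemma sA_incl_proof (i j : nat) (h : (i <= j)%N) (a : A) :
  (exists b : A, a = s ^+ j *: b) -> exists b : A, a = s ^+ i *: b.
Proof.
case=> b ->; exists (s ^+ (j - i) *: b).
rewrite scalerA -exprD.
by have -> : (i + (j - i) = j)%N by lia.
Qed.

Definition sA_incl (i j : natcat) (h : chom i j) (x : sA j) : sA i :=
  exist _ (proj1_sig x) (sA_incl_proof h (proj2_sig x)).

Lemma sA_incl_id (i : natcat) (x : sA i) : sA_incl (cid i) x = x.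
Proof.
case: x => a p; rewrite /sA_incl /=; congr exist; exact: proof_irrelevance.
Qed.

Lemma sA_incl_comp (i j k : natcat) (u : chom i j) (v : chom j k) (x : sA k) :
  sA_incl (ccomp v u) x = sA_incl u (sA_incl v x).
Proof.
case: x => a p; rewrite /sA_incl /=; congr exist; exact: proof_irrelevance.
Qed.

Definition ideal_proset : proset :=
  @ProSet natcat natcat_filtered sA sA_incl sA_incl_id sA_incl_comp.

(* The localization A_s = s^{-1} A as a set: classes of pairs (a, n),
   representing a / s^n, where (a,n) ~ (b,m) iff s^k (s^m a - s^n b) = 0
   for some k. *)
Definition locrel (x y : A * nat) : Prop :=
  exists k : nat, s ^+ k *: (s ^+ y.2 *: x.1 - s ^+ x.2 *: y.1) = 0.

Definition loc : Type := {P : A * nat -> Prop | exists x, P = locrel x}.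

Definition loc_cls (x : A * nat) : loc :=
  exist (fun P => exists y, P = locrel y) (locrel x) (ex_intro _ x erefl).

Definition to_loc (a : A) : loc := loc_cls (a, 0%N).

Definition coloc_to_ideal : prorawhom coloc_proset ideal_proset :=
  fun j : natcat =>
    existT (fun i : natcat => A -> sA j) j
           (fun a => exist (fun x => exists b : A, x = s ^+ j *: b)
                           (s ^+ j *: a) (ex_intro _ a erefl)).

Definition ideal_to_loc : prorawhom ideal_proset (const_proset loc) :=
  fun _ => existT (fun i : natcat => sA i -> loc) 0%N
                  (fun x => to_loc (proj1_sig x)).
End Towers.

From Pilot Require Import Defs.
From HB Require Import structures.
From mathcomp Require Import all_boot all_order all_algebra.
From mathcomp Require Import zify.
From Stdlib Require Import ClassicalEpsilon ProofIrrelevance.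

(* A ⋊ K is a quotient of a polynomial ring in finitely many variables over the
   Noetherian ring K, hence Noetherian by Hilbert's basis theorem.  The ascending
   chain of annihilators of s^n in A ⋊ K therefore stabilizes: some s^c kills all
   s-power torsion of A.  With this uniform bound, s^(n+c) b |-> s^c b is a
   well-defined map s^(n+c) A -> A^(s^n), inverse to a |-> s^n a in Pro(Set), and
   two elements of s^(n+c) A with the same image in A_s already agree in s^n A. *)

Set Implicit Arguments.
Unset Strict Implicit.
Import GRing.Theory.
Local Open Scope ring_scope.

Section Chains.
Variables (T : Type) (J : nat -> T -> Prop).
Hypothesis J_mono : forall n x, J n x -> J n.+1 x.

Definition stabilizes_at (N : nat) : Prop :=
  forall n x, (N <= n)%N -> J n x -> J N x.

Lemma chain_le m n x : (m <= n)%N -> J m x -> J n x.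
Proof.
elim: n => [|n IH]; first by rewrite leqn0 => /eqP ->.
by rewrite leq_eqVlt => /orP [/eqP ->|/IH Jmn /Jmn /J_mono].
Qed.

Lemma stabilizes_at_union N m x : stabilizes_at N -> J m x -> J N x.
Proof.
move=> stN Jm; case: (leqP N m) => [Nm|/ltnW mN]; first exact: stN Jm.
exact: chain_le mN Jm.
Qed.

Lemma stabilizes_at_le N M : stabilizes_at N -> (N <= M)%N -> stabilizes_at M.
Proof.
move=> stN NM n x Mn Jn.
exact: chain_le NM (stN _ _ (leq_trans NM Mn) Jn).
Qed.
End Chains.
Arguments stabilizes_at_le [T J] J_mono [N M] _ _ n x.

Lemma stabilizes_at_uniform T (J : nat -> nat -> T -> Prop) :
  (forall d n x, J d n x -> J d n.+1 x) ->
  (forall d, exists N, stabilizes_at (J d) N) ->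
  forall D, exists N, forall d, (d < D)%N -> stabilizes_at (J d) N.
Proof.
move=> J_mono stJ; elim=> [|D [N stN]]; first by exists 0%N.
have [M stM] := stJ D; exists (maxn N M) => d; rewrite ltnS leq_eqVlt.
case/orP=> [/eqP ->|/stN st].
- exact (stabilizes_at_le (J_mono D) stM (leq_maxr N M)).
- exact (stabilizes_at_le (J_mono d) st (leq_maxl N M)).
Qed.

Lemma idealB (K : comPzRingType) (I : K -> Prop) x y :
  is_ideal I -> I x -> I y -> I (x - y).
Proof. by case=> _ ID IM Ix Iy; apply: ID => //; rewrite -mulN1r; apply: IM. Qed.

Lemma noetherian_surj (R S : comPzRingType) (f : {rmorphism R -> S}) :
  (forall y, exists x, f x = y) -> noetherian R -> noetherian S.
Proof.
move=> f_surj nR I I_ideal I_mono.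
have [N stN] : exists N, stabilizes_at (fun n x => I n (f x)) N.
  apply: nR => [n|n x]; last exact: I_mono.
  case: (I_ideal n) => I0 ID IM; split => [|x y|r x].
  - by rewrite rmorph0.
  - by rewrite rmorphD; apply: ID.
  - by rewrite rmorphM; apply: IM.
by exists N => n y Nn; have [x <-] := f_surj y; apply: stN.
Qed.

Section HilbertBasis.
Variable R : comNzRingType.

Definition lead_ideal (d : nat) (I : {poly R} -> Prop) (r : R) : Prop :=
  exists2 p, I p & (size p <= d.+1)%N /\ p`_d = r.

Lemma lead_ideal_ideal d I : is_ideal I -> is_ideal (lead_ideal d I).
Proof.
case=> I0 ID IM; split.
- by exists 0; rewrite ?size_poly0 ?coef0.
- move=> _ _ [p Ip [sp <-]] [q Iq [sq <-]]; exists (p + q); first exact: ID.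
  by rewrite coefD (leq_trans (size_polyD _ _)) // geq_max sp sq.
- move=> r _ [p Ip [sp <-]]; exists (r%:P * p); first exact: IM.
  by rewrite coefCM mul_polyC (leq_trans (size_scale_leq _ _)).
Qed.

Lemma lead_idealS d I r : is_ideal I -> lead_ideal d I r -> lead_ideal d.+1 I r.
Proof.
case=> _ _ IM [p Ip [sp <-]]; exists ('X * p); first exact: IM.
rewrite coefXM mulrC; split=> //.
by have [->|/size_mulX ->] := eqVneq p 0; rewrite ?mul0r ?size_poly0 ?ltnS.
Qed.

Lemma lead_ideal_le d d' I r :
  is_ideal I -> (d <= d')%N -> lead_ideal d I r -> lead_ideal d' I r.
Proof. by move=> hI; apply: (chain_le (fun n r => @lead_idealS n I r hI)). Qed.

Lemma size_subr_lead (p q : {poly R}) : p != 0 ->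
  (size q <= size p)%N -> q`_(size p).-1 = lead_coef p ->
  (size (p - q)%R < size p)%N.
Proof.
rewrite -size_poly_gt0 => /prednK sz sq eq; rewrite -sz ltnS.
apply/leq_sizeP => j; rewrite leq_eqVlt => /predU1P[<-|lt_j].
  by rewrite coefB eq lead_coefE subrr.
have le_pj : (size p <= j)%N by rewrite -sz.
by rewrite coefB !nth_default ?subrr // (leq_trans sq).
Qed.

(* The induction on degrees behind Hilbert's basis theorem. *)
Lemma ideal_sub_of_lead (I J : {poly R} -> Prop) : is_ideal I -> is_ideal J ->
  (forall p, I p -> J p) -> (forall d r, lead_ideal d J r -> lead_ideal d I r) ->
  forall p, J p -> I p.
Proof.
move=> hI hJ IJ JI p; have [n] := ubnP (size p); elim: n p => [|n IH] p.
  by rewrite ltn0.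
rewrite ltnS => sp Jp; have [->|p0] := eqVneq p 0; first by case: hI.
have [q Iq [sq eq]] : lead_ideal (size p).-1 I (lead_coef p).
  by apply: JI; exists p; rewrite ?prednK ?size_poly_gt0.
rewrite -(subrK q p); case: (hI) => _ ID _; apply: ID => //; apply: IH.
- apply: leq_trans sp; apply: size_subr_lead => //.
  by rewrite prednK ?size_poly_gt0 in sq.
- exact: idealB hJ Jp (IJ q Iq).
Qed.

Lemma noetherian_poly : noetherian R -> noetherian {poly R}.
Proof.
move=> nR I I_ideal I_mono.
pose L d n := lead_ideal d (I n).
have L_ideal d n : is_ideal (L d n) := lead_ideal_ideal d (I_ideal n).
have L_mono d n r : L d n r -> L d n.+1 r.
  by case=> p Ip sp; exists p => //; apply: I_mono.
have L_stab d : exists N, stabilizes_at (L d) N := nR _ (L_ideal d) (L_mono d).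
pose U d r := exists n, L d n r.
have [D stD] : exists D, stabilizes_at U D.
  apply: nR => [d|d r [n Lr]]; last by exists n; apply: lead_idealS.
  split=> [|x y [m Lx] [n Ly]|r x [n Lx]].
  - by exists 0%N; case: (L_ideal d 0%N).
  - exists (maxn m n); case: (L_ideal d (maxn m n)) => _ LD _; apply: LD.
    + exact: (@chain_le _ (L d) (L_mono d) _ _ _ (leq_maxl m n) Lx).
    + exact: (@chain_le _ (L d) (L_mono d) _ _ _ (leq_maxr m n) Ly).
  - by exists n; case: (L_ideal d n) => _ _ LM; apply: LM.
have [N stN] := stabilizes_at_uniform L_mono L_stab D.+1.
exists N => n p Nn Inp.
apply: (ideal_sub_of_lead (I_ideal N) (I_ideal n)) => [q Iq|d r Lr|//].
  exact: (chain_le I_mono Nn Iq).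
case: (leqP d D) => [dD|Dd]; first exact: stN Nn Lr.
have [m LD] : U D r by apply: stD (ltnW Dd) _; exists n.
have LN := stabilizes_at_union (L_mono D) (stN D (ltnSn D)) LD.
exact: lead_ideal_le (I_ideal N) (ltnW Dd) LN.
Qed.
End HilbertBasis.

Fixpoint poly_tower (R : comNzRingType) (m : nat) : comNzRingType :=
  if m is m'.+1 then ({poly poly_tower R m'} : comNzRingType) else R.

Lemma noetherian_poly_tower (R : comNzRingType) m :
  noetherian R -> noetherian (poly_tower R m).
Proof. by move=> nR; elim: m => [|m IH] //=; apply: noetherian_poly. Qed.

Section FinitelyGenerated.
Variables (K S : comNzRingType) (iota : {rmorphism K -> S}) (gs : seq S).

Definition alg_generated : Prop :=
  forall x (P : S -> Prop), P 1 -> (forall g, g \in gs -> P g) ->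
    (forall y z, P y -> P z -> P (y + z)) ->
    (forall r y, P y -> P (iota r * y)) ->
    (forall y z, P y -> P z -> P (y * z)) -> P x.

Fixpoint eval_tower (m : nat) : {rmorphism poly_tower K m -> S} :=
  match m return {rmorphism poly_tower K m -> S} with
  | 0 => iota
  | m'.+1 => horner_morph (fun x => mulrC gs`_m' (eval_tower m' x))
  end.

Definition tower_image m (y : S) : Prop := exists p, eval_tower m p = y.

Lemma tower_imageS m y : tower_image m y -> tower_image m.+1 y.
Proof. by case=> p <-; exists (p%:P : {poly _}); rewrite /= horner_morphC. Qed.

Lemma tower_image_le m m' y : (m <= m')%N -> tower_image m y -> tower_image m' y.
Proof. exact: (chain_le tower_imageS). Qed.

Lemma tower_image_gen i : tower_image i.+1 gs`_i.
Proof. by exists ('X : {poly _}); rewrite /= horner_morphX. Qed.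

Lemma eval_tower_surj : alg_generated -> forall y, tower_image (size gs) y.
Proof.
move=> gen y; apply: gen => [|g|_ _ [p <-] [q <-]|r _ [p <-]|_ _ [p <-] [q <-]].
- by exists 1; rewrite rmorph1.
- move=> g_gs; rewrite -(nth_index 0 g_gs).
  by apply: tower_image_le (tower_image_gen _); rewrite index_mem.
- by exists (p + q); rewrite rmorphD.
- have [q <-] : tower_image (size gs) (iota r).
    by apply: (@tower_image_le 0); last exists r.
  by exists (q * p); rewrite rmorphM.
- by exists (p * q); rewrite rmorphM.
Qed.

Lemma noetherian_alg_generated : noetherian K -> alg_generated -> noetherian S.
Proof.
move=> nK gen; apply: (noetherian_surj (f := eval_tower (size gs))).
  exact: eval_tower_surj.
exact: noetherian_poly_tower.
Qed.
End FinitelyGenerated.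

Lemma noetherian_annihilator_stable (S : comPzRingType) (s : S) : noetherian S ->
  exists c, forall n x, s ^+ n * x = 0 -> s ^+ c * x = 0.
Proof.
move=> nS; pose Ann n x := s ^+ n * x = 0.
have Ann_mono n x : Ann n x -> Ann n.+1 x.
  by rewrite /Ann exprS -mulrA => ->; rewrite mulr0.
have [c stc] : exists c, stabilizes_at Ann c.
  apply: nS Ann_mono => n; split=> [|x y|r x]; first by rewrite /Ann mulr0.
  - by rewrite /Ann mulrDr => -> ->; rewrite addr0.
  - by rewrite /Ann mulrCA => ->; rewrite mulr0.
by exists c => n x; apply: (@stabilizes_at_union _ Ann Ann_mono).
Qed.

Definition torsion_exponent (K : comPzRingType) (A : lmodType K) (s : K) (c : nat) :=
  forall n (a : A), s ^+ n *: a = 0 -> s ^+ c *: a = 0.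

Section UnitizationRing.
Variables (K : comNzRingType) (A : lmodType K) (mul : A -> A -> A).
Hypothesis mulP : nucomalg mul.

Lemma algmulA a b c : mul a (mul b c) = mul (mul a b) c. Proof. by case: mulP. Qed.
Lemma algmulC a b : mul a b = mul b a. Proof. by case: mulP. Qed.
Lemma algmulDl a b c : mul (a + b) c = mul a c + mul b c. Proof. by case: mulP. Qed.
Lemma algmulZl k a b : mul (k *: a) b = k *: mul a b. Proof. by case: mulP. Qed.
Lemma algmulDr a b c : mul c (a + b) = mul c a + mul c b.
Proof. by rewrite !(algmulC c) algmulDl. Qed.
Lemma algmulZr k a b : mul b (k *: a) = k *: mul b a.
Proof. by rewrite !(algmulC b) algmulZl. Qed.
Lemma algmul0l a : mul 0 a = 0.
Proof. by have := algmulZl 0 0 a; rewrite !scale0r. Qed.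

Definition unitization : Type := (A * K)%type.
HB.instance Definition _ := GRing.Zmodule.on unitization.

Lemma sd_mulA : associative (sd_mul mul : unitization -> unitization -> unitization).
Proof.
move=> [a k] [b l] [c m]; rewrite /sd_mul /=; congr pair; last by rewrite mulrA.
rewrite !algmulDl !algmulDr !algmulZl !algmulZr !scalerDr !scalerA !algmulA.
by rewrite (mulrC m l) (mulrC m k) !addrA [LHS](ACl (1*3*5*2*4*6*7)).
Qed.

Lemma sd_mulC : commutative (sd_mul mul : unitization -> unitization -> unitization).
Proof.
move=> [a k] [b l]; rewrite /sd_mul /=; congr pair; last by rewrite mulrC.
by rewrite algmulC addrAC.
Qed.

Lemma sd_mul1 : left_id (@sd_one K A : unitization) (sd_mul mul).
Proof.
by move=> [a k]; rewrite /sd_mul /= algmul0l scaler0 scale1r !add0r mul1r.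
Qed.

Lemma sd_mulDl :
  left_distributive (sd_mul mul : unitization -> unitization -> unitization) +%R.
Proof.
move=> [a k] [b l] [c m]; rewrite /sd_mul /=; congr pair; last by rewrite mulrDl.
by rewrite algmulDl scalerDr scalerDl !addrA [LHS](ACl (1*3*5*2*4*6)).
Qed.

Lemma sd_one_neq0 : (@sd_one K A : unitization) != 0.
Proof. by apply/negP => /eqP [] /eqP; rewrite oner_eq0. Qed.

HB.instance Definition _ := GRing.Zmodule_isComNzRing.Build unitization
  sd_mulA sd_mulC sd_mul1 sd_mulDl sd_one_neq0.

Definition unit_scalar (c : K) : unitization := (0, c).

Lemma unit_scalarM c (x : unitization) : unit_scalar c * x = sd_scale c x.
Proof.
case: x => a k; rewrite -[LHS]/(sd_mul mul (0, c) (a, k)) /sd_mul /=.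
by rewrite algmul0l scaler0 !add0r.
Qed.

Lemma unit_scalar_is_zmod_morphism : zmod_morphism unit_scalar.
Proof. by move=> x y; rewrite /unit_scalar; congr pair; rewrite subrr. Qed.
HB.instance Definition _ := GRing.isZmodMorphism.Build K unitization unit_scalar
  unit_scalar_is_zmod_morphism.

Lemma unit_scalar_is_monoid_morphism : monoid_morphism unit_scalar.
Proof. by split=> // x y; rewrite unit_scalarM /sd_scale /= scaler0. Qed.
HB.instance Definition _ := GRing.isMonoidMorphism.Build K unitization unit_scalar
  unit_scalar_is_monoid_morphism.

Lemma noetherian_unitization :
  noetherian K -> fg_unitization mul -> noetherian unitization.
Proof.
move=> nK [gs gen]; apply: (@noetherian_alg_generated _ _ unit_scalar gs) => //.
move=> x P P1 Pgs PD PZ PM; apply: (gen x P) => // r y Py.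
by rewrite -unit_scalarM; apply: PZ.
Qed.

Lemma unitization_torsion_exponent s :
  noetherian K -> fg_unitization mul -> exists c, torsion_exponent A s c.
Proof.
move=> nK fg; have [c ann] := noetherian_annihilator_stable (unit_scalar s)
  (noetherian_unitization nK fg).
exists c => n a /= san; have := ann n (a, 0).
rewrite -!rmorphXn !unit_scalarM /sd_scale /= san mulr0 => /(_ erefl).
by case.
Qed.
End UnitizationRing.

(* The unitization ring needs [1 != 0]; we view [K] and [A] through aliases
   carrying the nontrivial-ring structure. *)
Section NonzeroAlias.
Variables (K : comPzRingType) (A : lmodType K).
Hypothesis one_neq0 : (1 : K) != 0.

Definition nz_scalars : Type := K.
HB.instance Definition _ := GRing.ComPzRing.on nz_scalars.
HB.instance Definition _ := GRing.PzSemiRing_isNonZero.Build nz_scalars one_neq0.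

Definition nz_module : Type := A.
HB.instance Definition _ := GRing.Zmodule.on nz_module.
Definition nz_scale (k : nz_scalars) (a : nz_module) : nz_module := (k : K) *: (a : A).
Lemma nz_scaleA a b v : nz_scale a (nz_scale b v) = nz_scale (a * b) v.
Proof. exact: scalerA. Qed.
Lemma nz_scale1 : left_id 1 nz_scale. Proof. exact: scale1r. Qed.
Lemma nz_scaleDr : right_distributive nz_scale +%R. Proof. exact: scalerDr. Qed.
Lemma nz_scaleDl v : {morph nz_scale^~ v: a b / a + b}. Proof. exact: scalerDl. Qed.
HB.instance Definition _ := GRing.Zmodule_isLmodule.Build nz_scalars nz_module
  nz_scaleA nz_scale1 nz_scaleDr nz_scaleDl.

Lemma nz_torsion_exponent (mul : A -> A -> A) s :
  noetherian K -> nucomalg mul -> fg_unitization mul ->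
  exists c, torsion_exponent A s c.
Proof.
by move=> nK mulP fg; apply: (@unitization_torsion_exponent nz_scalars nz_module mul).
Qed.
End NonzeroAlias.

Lemma fg_unitization_torsion_exponent (K : comPzRingType) (A : lmodType K)
    (mul : A -> A -> A) s :
  noetherian K -> nucomalg mul -> fg_unitization mul ->
  exists c, torsion_exponent A s c.
Proof.
have [K0 _ _ _|one_neq0] := eqVneq (1 : K) 0; last exact: nz_torsion_exponent.
by exists 0%N => n a _; rewrite -[a]scale1r K0 !scale0r scaler0.
Qed.

Definition germ (Z : proset) (T : Type) : Type := {i : pidx Z & @pobj Z i -> T}.

Definition germ_eq (Z : proset) (T : Type) (f g : germ Z T) : Prop :=
  exists (k : pidx Z) (u : chom (projT1 f) k) (v : chom (projT1 g) k),
    forall x, projT2 f (Defs.pmap u x) = projT2 g (Defs.pmap v x).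

Section Germs.
Variables (Z : proset) (T : Type).

Lemma germ_eq_sym (f g : germ Z T) : germ_eq f g -> germ_eq g f.
Proof. by case=> k [u [v e]]; exists k, v, u => x; rewrite e. Qed.

Lemma germ_eq_trans (f g h : germ Z T) : germ_eq f g -> germ_eq g h -> germ_eq f h.
Proof.
case=> k1 [u1 [v1 e1]] [k2 [u2 [v2 e2]]].
case: (pidx_filtered Z) => _ upper coequalize.
have [k3 [[w1] [w2]]] := upper k1 k2.
have [k [w ew]] := coequalize _ _ (ccomp w1 v1) (ccomp w2 u2).
exists k, (ccomp w (ccomp w1 u1)), (ccomp w (ccomp w2 v2)) => x.
have fold_v1 : Defs.pmap v1 (Defs.pmap w1 (Defs.pmap w x)) =
    Defs.pmap (ccomp w (ccomp w1 v1)) x by rewrite !pmap_comp.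
by rewrite !pmap_comp e1 fold_v1 ew !pmap_comp e2.
Qed.

Lemma germ_eq_comp T' (h : T -> T') (f g : germ Z T) : germ_eq f g ->
  germ_eq (existT _ (projT1 f) (fun x => h (projT2 f x)))
          (existT _ (projT1 g) (fun x => h (projT2 g x))).
Proof. by case=> k [u [v e]]; exists k, u, v => x /=; rewrite e. Qed.

Lemma germ_eq_factor T' T'' (phi : T -> T') (psi : T -> T'') i1 i2
    (F1 : @pobj Z i1 -> T) (F2 : @pobj Z i2 -> T) :
  (forall x y, phi x = phi y -> psi x = psi y) ->
  germ_eq (existT _ i1 (fun x => phi (F1 x))) (existT _ i2 (fun x => phi (F2 x))) ->
  germ_eq (existT _ i1 (fun x => psi (F1 x))) (existT _ i2 (fun x => psi (F2 x))).
Proof. by move=> phi_psi [k [u [v e]]]; exists k, u, v => x; apply/phi_psi/e. Qed.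
End Germs.

Section IdealTower.
Variables (K : comPzRingType) (A : lmodType K) (s : K).

Definition sA_root n (x : @sA K A s n) : A :=
  proj1_sig (constructive_indefinite_description _ (proj2_sig x)).

Lemma sA_rootP n (x : @sA K A s n) : proj1_sig x = s ^+ n *: sA_root x.
Proof. exact: proj2_sig (constructive_indefinite_description _ (proj2_sig x)). Qed.

Lemma sA_val_inj n (x y : @sA K A s n) : proj1_sig x = proj1_sig y -> x = y.
Proof.
by case: x y => a p [b q] /= eab; subst b; congr exist; apply: proof_irrelevance.
Qed.

Lemma to_loc_eq (a b : A) :
  to_loc s a = to_loc s b -> exists k, s ^+ k *: a = s ^+ k *: b.
Proof.
move=> eab; have : locrel s (a, 0%N) (a, 0%N) by exists 0%N; rewrite subrr scaler0.
rewrite -[locrel s (a, 0%N)]/(proj1_sig (to_loc s a)) eab /= => -[k].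
rewrite !expr0 !scale1r scalerBr => /eqP; rewrite subr_eq0 => /eqP ekab.
by exists k.
Qed.

Lemma coloc_to_ideal_prohom : is_prohom (@coloc_to_ideal K A s).
Proof.
move=> j j' le_jj'; exists j', (cid j'), le_jj' => a /=; apply: sA_val_inj => /=.
by rewrite /coloc_map subnn expr0 scale1r scalerA -exprD subnKC.
Qed.

Lemma ideal_to_loc_prohom : is_prohom (@ideal_to_loc K A s).
Proof. by move=> j j' v; exists 0%N, (cid (0%N : natcat)), (cid (0%N : natcat)). Qed.

Variable c : nat.
Hypothesis tor : torsion_exponent A s c.

Lemma torsion_cancel n (a b : A) :
  s ^+ n *: a = s ^+ n *: b -> s ^+ c *: a = s ^+ c *: b.
Proof.
move=> eab; apply/eqP; rewrite -subr_eq0 -scalerBr; apply/eqP/(tor (n := n)).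
by rewrite scalerBr eab subrr.
Qed.

(* The inverse divides by [s^n] at the cost of shifting the index by [c]. *)
Definition ideal_to_coloc : prorawhom (ideal_proset A s) (coloc_proset A s) :=
  fun j : natcat => existT (fun i : natcat => @sA K A s i -> A) (j + c)%N
                           (fun x => s ^+ c *: sA_root x).

Lemma ideal_to_coloc_prohom : is_prohom ideal_to_coloc.
Proof.
move=> j j' le_jj'; have le_jcj'c : (j + c <= j' + c)%N by rewrite leq_add2r.
exists (j' + c)%N, (cid _), le_jcj'c => x /=.
rewrite /coloc_map scalerA (mulrC _ (s ^+ c)) -scalerA.
apply: (@torsion_cancel (j + c)); rewrite -[RHS]sA_rootP scalerA -exprD.
by rewrite (_ : j + c + (j' - j) = j' + c)%N -?sA_rootP //; lia.
Qed.

Lemma ideal_to_colocK : prohom_eq (procomp ideal_to_coloc (@coloc_to_ideal K A s))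
                                  (proid (coloc_proset A s)).
Proof.
move=> j; exists (j + c)%N, (cid _), (leq_addr c j) => a /=.
rewrite /coloc_map subnn expr0 scale1r (_ : j + c - j = c)%N; last by lia.
by apply: (@torsion_cancel (j + c)); rewrite -sA_rootP.
Qed.

Lemma coloc_to_idealK : prohom_eq (procomp (@coloc_to_ideal K A s) ideal_to_coloc)
                                  (proid (ideal_proset A s)).
Proof.
move=> j; exists (j + c)%N, (cid _), (leq_addr c j) => x /=.
by apply: sA_val_inj => /=; rewrite scalerA -exprD -sA_rootP.
Qed.

Lemma coloc_to_ideal_iso : pro_iso (@coloc_to_ideal K A s).
Proof.
split; first exact: coloc_to_ideal_prohom.
by exists ideal_to_coloc; split; [exact: ideal_to_coloc_prohom
  | exact: ideal_to_colocK | exact: coloc_to_idealK].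
Qed.

Lemma to_loc_sA_inj n (x y : @sA K A s n) : (c <= n)%N ->
  to_loc s (proj1_sig x) = to_loc s (proj1_sig y) -> x = y.
Proof.
move=> le_cn /to_loc_eq [k]; rewrite !sA_rootP !scalerA -!exprD => /torsion_cancel e.
have split_n : s ^+ n = s ^+ (n - c) * s ^+ c by rewrite -exprD subnK.
by apply: sA_val_inj; rewrite !sA_rootP split_n -!scalerA e.
Qed.

Lemma ideal_to_loc_mono : pro_mono (@ideal_to_loc K A s).
Proof.
split; first exact: ideal_to_loc_prohom.
move=> Z g1 g2 g1_hom g2_hom eq12 j; pose J := (j + c)%N.
have le_jJ : chom (j : natcat) (J : natcat) := leq_addr c j.
have le_0J : chom (0%N : natcat) (J : natcat) := leq0n J.
pose loc_of n (x : @sA K A s n) := to_loc s (proj1_sig x).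
have locJ : germ_eq (existT _ (projT1 (g1 J)) (fun z => loc_of J (projT2 (g1 J) z)))
                    (existT _ (projT1 (g2 J)) (fun z => loc_of J (projT2 (g2 J) z))).
  apply: germ_eq_trans (germ_eq_comp (loc_of 0%N) (g1_hom 0%N J le_0J)) _.
  apply: germ_eq_trans (eq12 tt) _.
  exact: germ_eq_sym (germ_eq_comp (loc_of 0%N) (g2_hom 0%N J le_0J)).
have inclJ := germ_eq_factor (psi := sA_incl le_jJ)
  (fun x y exy => congr1 _ (to_loc_sA_inj (leq_addl j c) exy)) locJ.
exact: germ_eq_trans (germ_eq_sym (g1_hom j J le_jJ))
                     (germ_eq_trans inclJ (g2_hom j J le_jJ)).
Qed.
End IdealTower.

Theorem lemma4 (K : comPzRingType) (A : lmodType K) (mul : A -> A -> A) (s : K) :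
  noetherian K ->
  nucomalg mul ->
  fg_unitization mul ->
  pro_iso (@coloc_to_ideal K A s) /\ pro_mono (@ideal_to_loc K A s).
Proof.
move=> nK mulP fg; have [c tor] := fg_unitization_torsion_exponent s nK mulP fg.
by split; [exact: coloc_to_ideal_iso tor | exact: ideal_to_loc_mono tor].
Qed.
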